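(* Let $R$ be a finite group, let $T$ be a subgroup of $R$, let $p$ be a prime number, and let $\mathrm{Syl}_p(R,T)$ denote the set of Sylow $p$-subgroups $P$ of $R$ such that $T\cap P$ is a Sylow $p$-subgroup of $T$. Then the number of orbits of $T$ acting by conjugation on $\mathrm{Syl}_p(R,T)$ is at most $[R:T]/p^c$, where $p^c$ is the largest power of $p$ dividing $[R:T]$. *)

From mathcomp Require Import all_boot all_fingroup all_solvable.
Set Implicit Arguments. Unset Strict Implicit. Unset Printing Implicit Defensive.
Import GroupScope.

Definition SylRT (gT : finGroupType) (p : nat) (R T : {set gT}) : {set {group gT}} :=
  [set P in 'Syl_p(R) | p.-Sylow(T) (T :&: P)].

From mathcomp Require Import all_boot all_fingroup all_solvable.
Import GroupScope.

(* Every T-orbit O of Sylow p-subgroups of R already satisfies the bound, not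
   only those in SylRT.  If P is in O then |O| |N_R(P)| = |T| |N_R(P) : N_T(P)|
   is divisible by |T|, and also by |R|_p since P <= N_R(P); hence by
   |R|_p |T|_p'.  As |N_R(P)| = |R| / |Syl_p(R)| does not depend on P, summing
   over the orbits gives (number of orbits) |R|_p |T|_p' <= |R|, and
   |R| / (|R|_p |T|_p') = [R : T]_p'. *)

Lemma partn_mul_partC_index (gT : finGroupType) (G H : {group gT}) pi :
  H \subset G -> (#|G|`_pi * #|H|`_pi^' * #|G : H|`_pi^')%N = #|G|.
Proof.
move=> sHG; rewrite -{1}(Lagrange sHG) partnM ?cardG_gt0 ?indexg_gt0 //.
by rewrite -mulnA mulnACA !partnC ?cardG_gt0 ?indexg_gt0 ?Lagrange.
Qed.

Section SylowOrbits.

Variables (gT : finGroupType) (R T : {group gT}) (p : nat).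
Hypothesis sTR : T \subset R.

Lemma card_dvd_orbitJG_mul_norm (P : {group gT}) :
  (#|T| %| #|orbit 'JG T P| * #|'N_R(P)|)%N.
Proof.
rewrite card_orbit astab1JG -(Lagrange (setSI 'N(P) sTR)).
by rewrite -{1}(Lagrange (subsetIl T 'N(P))) mulnCA mulnA dvdn_mulr.
Qed.

Lemma Sylow_dvd_orbitJG_mul_norm (P : {group gT}) : p.-Sylow(R) P ->
  (#|R|`_p * #|T|`_p^' %| #|orbit 'JG T P| * #|'N_R(P)|)%N.
Proof.
move=> sylP; rewrite Gauss_dvd ?coprime_partC //; apply/andP; split.
  rewrite dvdn_mull // -(card_Hall sylP) cardSg // subsetI (pHall_sub sylP).
  exact: normG.
exact: dvdn_trans (dvdn_part _ _) (card_dvd_orbitJG_mul_norm P).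
Qed.

Lemma card_Syl_mul_norm (P : {group gT}) : p.-Sylow(R) P ->
  (#|'Syl_p(R)| * #|'N_R(P)| = #|R|)%N.
Proof. by move=> sylP; rewrite (card_Syl sylP) mulnC Lagrange ?subsetIl. Qed.

Lemma card_orbitsJG_Syl_mul_le :
  (#|orbit 'JG T @: 'Syl_p(R)| * (#|R|`_p * #|T|`_p^') <= #|R|)%N.
Proof.
have [P0 sylP0] := Sylow_exists p R.
have Syl_gt0 : (0 < #|'Syl_p(R)|)%N by apply/card_gt0P; exists P0; rewrite inE.
have card_normE P : P \in 'Syl_p(R) -> #|'N_R(P)| = #|'N_R(P0)|.
  rewrite inE => sylP; apply/eqP.
  by rewrite -(eqn_pmul2l Syl_gt0) !card_Syl_mul_norm.
have actS : [acts T, on 'Syl_p(R) | 'JG].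
  exact: subset_trans sTR (atrans_acts (Syl_trans p R)).
rewrite -{2}(card_Syl_mul_norm _ sylP0) (card_partition (orbit_partition actS)).
rewrite big_distrl /= -sum_nat_const leq_sum // => _ /imsetP[P sylP ->].
rewrite -(card_normE P) //; apply: dvdn_leq.
  by rewrite muln_gt0 cardG_gt0 andbT card_orbit indexg_gt0.
by rewrite inE in sylP; apply: Sylow_dvd_orbitJG_mul_norm.
Qed.

End SylowOrbits.

Theorem lemma3p1 (gT : finGroupType) (R T : {group gT}) (p : nat) :
  T \subset R -> prime p ->
  (#|orbit 'JG T @: SylRT p R T| <= #|R : T| %/ p ^ logn p #|R : T|)%N.
Proof.
move=> sTR _. (* the bound holds for every p *)
have sub_orbits : (#|orbit 'JG T @: SylRT p R T|
                   <= #|orbit 'JG T @: 'Syl_p(R)|)%N.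
  by apply/subset_leq_card/imsetS/subsetP => P; rewrite inE => /andP[].
rewrite -p_part -{1}(partnC p (indexg_gt0 R T)) mulKn ?part_gt0 //.
apply: leq_trans sub_orbits _.
rewrite -(@leq_pmul2r (#|R|`_p * #|T|`_p^')) ?muln_gt0 ?part_gt0 //.
rewrite [leqRHS]mulnC partn_mul_partC_index //.
exact: card_orbitsJG_Syl_mul_le.
Qed.
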